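(* Let $T>0$, $N=2$, $M=2$. Consider minimizing $\mathbb V(T)=\frac12(\xi_1(T)^2+\xi_2(T)^2)$ over $\alpha\in\mathcal U_2$, where $\dot\xi_i=-\xi_i+(1-\alpha_i)\bar\xi$, $\bar\xi=\frac12(\xi_1+\xi_2)$, with $\bar\xi(0)>0$ and $\xi_1(0)>\xi_2(0)$. Let $\alpha$ be an optimal control whose trajectory satisfies $\xi_1(t)\ge\xi_2(t)$ for all $t$, and let $(\lambda_1,\lambda_2)$ be the corresponding covectors given by the Pontryagin maximum principle: $$\dot\lambda_1=\tfrac{1+\alpha_1}{2}\lambda_1-\tfrac{1-\alpha_2}{2}\lambda_2,\quad \dot\lambda_2=\tfrac{1+\alpha_2}{2}\lambda_2-\tfrac{1-\alpha_1}{2}\lambda_1,\quad \lambda(T)=(\xi_1(T),\xi_2(T)),$$ and for almost every $t$, $\alpha(t)$ minimizes $a\mapsto-\bar\xi(t)(a_1\lambda_1(t)+a_2\lambda_2(t))$ over $a\in[0,1]^2$, $a_1+a_2\le2$. Then: (i) if $\lambda_2(T)>0$, then $\lambda_1(t)>0$ and $\lambda_2(t)>0$ for all $t\in[0,T]$; (ii) if $\lambda_2(T)=0$, then $\lambda_1(t)>0$ and $\lambda_2(t)=0$ for all $t\in[0,T]$; (iii) if $\lambda_2(T)<0$, then $\lambda_2(t)<0$ for all $t\in[0,T]$.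
   Context: $\mathcal U_2$ is the set of measurable $\alpha:[0,T]\to[0,1]^2$ with $\alpha_1+\alpha_2\le2$. *)

From HB Require Import structures.
From mathcomp Require Import all_boot all_order all_algebra.
From mathcomp Require Import all_classical all_reals all_analysis.
Set Implicit Arguments. Unset Strict Implicit. Unset Printing Implicit Defensive.
Import Order.TTheory GRing.Theory Num.Theory.
Import numFieldNormedType.Exports.
Local Open Scope classical_set_scope.
Local Open Scope ring_scope.

(* Controls alpha = (a1, a2) : [0,T] -> [0,1]^2 with a1 + a2 <= 2, measurable
   (the set U_2). Functions are defined on R; only their values on [0,T] matter. *)
Definition admissible (R : realType) (T : R) (a1 a2 : R -> R) : Prop :=
  measurable_fun `[0, T] a1 /\ measurable_fun `[0, T] a2 /\
  (forall t, t \in `[0, T] ->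
     0 <= a1 t <= 1 /\ 0 <= a2 t <= 1 /\ a1 t + a2 t <= 2).

Definition xibar (R : realType) (x1 x2 : R -> R) (t : R) : R :=
  (x1 t + x2 t) / 2.

(* (x1, x2) is a (Caratheodory / absolutely continuous) solution on [0,T] of
   dx_i/dt = - x_i + (1 - a_i) xbar, written in integral form. *)
Definition trajectory (R : realType) (T : R) (a1 a2 x1 x2 : R -> R) : Prop :=
  {within `[0, T], continuous x1} /\ {within `[0, T], continuous x2} /\
  (forall t, t \in `[0, T] ->
     x1 t = x1 0 + \int[lebesgue_measure]_(s in `[0, t])
                     (- x1 s + (1 - a1 s) * xibar x1 x2 s)) /\
  (forall t, t \in `[0, T] ->
     x2 t = x2 0 + \int[lebesgue_measure]_(s in `[0, t])
                     (- x2 s + (1 - a2 s) * xibar x1 x2 s)).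

Definition cost (R : realType) (T : R) (x1 x2 : R -> R) : R :=
  (x1 T ^+ 2 + x2 T ^+ 2) / 2.

Definition optimal (R : realType) (T : R) (a1 a2 x1 x2 : R -> R) : Prop :=
  admissible T a1 a2 /\ trajectory T a1 a2 x1 x2 /\
  forall b1 b2 y1 y2 : R -> R, admissible T b1 b2 -> trajectory T b1 b2 y1 y2 ->
    y1 0 = x1 0 -> y2 0 = x2 0 -> cost T x1 x2 <= cost T y1 y2.

Definition costate (R : realType) (T : R) (a1 a2 x1 x2 l1 l2 : R -> R) : Prop :=
  {within `[0, T], continuous l1} /\ {within `[0, T], continuous l2} /\
  (forall t, t \in `[0, T] ->
     l1 t = l1 0 + \int[lebesgue_measure]_(s in `[0, t])
                ((1 + a1 s) / 2 * l1 s - (1 - a2 s) / 2 * l2 s)) /\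
  (forall t, t \in `[0, T] ->
     l2 t = l2 0 + \int[lebesgue_measure]_(s in `[0, t])
                ((1 + a2 s) / 2 * l2 s - (1 - a1 s) / 2 * l1 s)) /\
  l1 T = x1 T /\ l2 T = x2 T.

Definition pmp_min (R : realType) (T : R) (a1 a2 x1 x2 l1 l2 : R -> R) : Prop :=
  {ae (@lebesgue_measure R), forall t, t \in `[0, T] ->
     forall b1 b2 : R, 0 <= b1 <= 1 -> 0 <= b2 <= 1 -> b1 + b2 <= 2 ->
       - xibar x1 x2 t * (a1 t * l1 t + a2 t * l2 t)
       <= - xibar x1 x2 t * (b1 * l1 t + b2 * l2 t)}.

From HB Require Import structures.
From mathcomp Require Import all_boot all_order all_algebra.
From mathcomp Require Import all_classical all_reals all_analysis.
From mathcomp Require Import ring lra measurable_realfun.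
Import Order.TTheory GRing.Theory Num.Theory.
Import numFieldNormedType.Exports.
Set Implicit Arguments.
Unset Strict Implicit.
Unset Printing Implicit Defensive.
Local Open Scope classical_set_scope.
Local Open Scope ring_scope.

(* A continuous [F] with [|F'| <= K |F|] a.e. that vanishes at one point
   vanishes everywhere (on a segment of length [1 / (2 K + 2)] the maximum of
   [|F|] is at most half of itself), so such an [F] never changes sign.
   Applied to [x1 + x2] this gives [xibar > 0]; the minimum condition then forces
   [a_i = 1] wherever [l_i > 0], and [l1 T = x1 T > 0].
   (i) On the last interval [(t0, T]] where both costates are positive,
   [a = (1, 1)] and [l_i' = l_i], so neither costate can vanish at [t0].
   (ii) While [l1 > 0], [l2' = (1 + a2) / 2 * l2] and [l2 T = 0] force [l2 = 0],
   and then [l1' = (1 + a1) / 2 * l1] rules out a last zero of [l1].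
   (iii) [l2 - l1] solves [D' = D] and is negative at [T], hence everywhere;
   this gives [|l2'| <= 2 |l2|], so [l2] keeps the sign of [l2 T]. *)

Section ContinuousRoots.
Variable R : realType.
Implicit Types (f : R -> R) (c d p x : R).

Lemma within_itv_continuousW f c d c' d' :
  {within `[c, d], continuous f} -> c <= c' -> d' <= d ->
  {within `[c', d'], continuous f}.
Proof.
move=> cf cc' d'd; apply: continuous_subspaceW cf => t /=.
by rewrite !in_itv /= => /andP[? ?]; apply/andP; split; lra.
Qed.

Lemma within_continuous_gt0_near f c d x :
  {within `[c, d], continuous f} -> x \in `[c, d] -> 0 < f x ->
  exists2 e, 0 < e & forall y, y \in `[c, d] -> `|x - y| < e -> 0 < f y.
Proof.
move=> /subspace_continuousP cf xcd fx_gt0.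
have /cvgrPdist_lt/(_ _ fx_gt0) := cf x xcd.
rewrite near_withinE => /nbhs_ballP[e e_gt0 fe].
exists e => // y ycd xy.
have := fe y xy ycd; have := ler_norm (f x - f y); lra.
Qed.

Lemma last_root f c d p :
  {within `[c, d], continuous f} -> c <= p -> p <= d -> f p <= 0 -> 0 < f d ->
  exists t0, [/\ c <= t0, t0 < d, f t0 = 0 &
                 forall s, t0 < s -> s <= d -> 0 < f s].
Proof.
move=> cf cp pd fp_le0 fd_gt0.
pose S := [set t | c <= t /\ t <= d /\ f t <= 0].
have S_ub : has_sup S by split; [exists p | exists d => t [_ []]].
have p_le_sup : p <= sup S by apply: sup_upper_bound.
have sup_le_d : sup S <= d by apply: ge_sup; [exists p | move=> t [_ []]].
have after_sup s : sup S < s -> s <= d -> 0 < f s.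
  move=> sup_lt_s sd; rewrite ltNge; apply/negP => fs_le0.
  have : s <= sup S by apply: (sup_upper_bound S_ub); split; [lra | split].
  lra.
have fsup_le0 : f (sup S) <= 0.
  rewrite leNgt; apply/negP => fsup_gt0.
  have supI : sup S \in `[c, d] by rewrite in_itv /=; apply/andP; split; lra.
  have [e e_gt0 fe] := within_continuous_gt0_near cf supI fsup_gt0.
  have [s [cs [sd fs_le0]] near_sup] := sup_adherent e_gt0 S_ub.
  have s_le_sup : s <= sup S by apply: sup_upper_bound.
  have : 0 < f s.
    by apply: fe; [rewrite in_itv /= cs sd | rewrite ger0_norm; lra].
  lra.
have sup_lt_d : sup S < d.
  by rewrite lt_neqAle sup_le_d andbT; apply: contraTneq fd_gt0 => <-; rewrite -leNgt.
have cf_sup := within_itv_continuousW cf (le_trans cp p_le_sup) (lexx d).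
have [|z zI fz0] := IVT (v := 0) (ltW sup_lt_d) cf_sup.
  by rewrite ge_min le_max fsup_le0 (ltW fd_gt0) orbT.
move: zI; rewrite in_itv /= => /andP[sup_le_z zd].
have z_le_sup : z <= sup S.
  by rewrite leNgt; apply/negP => /after_sup/(_ zd); rewrite fz0 ltxx.
exists (sup S); split => //; first lra.
by have -> : sup S = z by apply/le_anti; rewrite sup_le_z z_le_sup.
Qed.

Lemma root_between f c d p x :
  {within `[c, d], continuous f} -> c <= p -> p <= d -> c <= x -> x <= d ->
  f p * f x <= 0 -> exists z, [/\ c <= z, z <= d & f z = 0].
Proof.
move=> cf; wlog px : p x / p <= x => [hwlog cp pd cx xd fpx|cp _ _ xd fpx].
  have [/hwlog|/ltW/hwlog] := leP p x; apply => //; by rewrite mulrC.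
have [|z] := IVT (v := 0) px (within_itv_continuousW cf cp xd).
  apply/andP; split; rewrite ?ge_min ?le_max; apply/orP.
    by have [|] := leP (f p) 0; [left|right; nra].
  by have [|] := leP 0 (f p); [left|right; nra].
by rewrite in_itv /= => /andP[pz zx] fz; exists z; split => //; lra.
Qed.

End ContinuousRoots.

Section IncrementBound.
Variables (R : realType) (f : R -> R) (c d K : R).
Hypothesis K_ge0 : 0 <= K.
Hypothesis f_cont : {within `[c, d], continuous f}.
Hypothesis f_incr : forall t u (M : R), c <= t -> t <= u -> u <= d ->
  (forall s, t <= s -> s <= u -> `|f s| <= M) -> `|f u - f t| <= K * M * (u - t).

Let delta : R := (2 * K + 2)^-1.

Let delta_gt0 : 0 < delta. Proof. by rewrite /delta invr_gt0; have := K_ge0; lra. Qed.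

Let K_delta : K * delta <= 1 / 2.
Proof. by rewrite /delta ler_pdivrMr; have := K_ge0; lra. Qed.

Lemma vanish_short_segment lo hi : c <= lo -> lo <= hi -> hi <= d ->
  hi - lo <= delta -> f lo = 0 \/ f hi = 0 -> forall s, lo <= s -> s <= hi -> f s = 0.
Proof.
move=> clo lohi hid short f0.
have cf : {within `[lo, hi], continuous (fun s => `|f s|)}.
  move=> s; apply: (continuous_comp _ (@norm_continuous _ R^o _)).
  exact: within_itv_continuousW f_cont clo hid s.
have [m /[!in_itv] /andP[lom mhi] fm_max] := EVT_max lohi cf.
have f_le_m s : lo <= s -> s <= hi -> `|f s| <= `|f m|.
  by move=> ls sh; apply: fm_max; rewrite in_itv /= ls sh.
have half t u : lo <= t -> t <= u -> u <= hi -> `|f u - f t| <= `|f m| / 2.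
  move=> lt tu uh; apply: le_trans (@f_incr t u `|f m| _ tu _ _) _; try lra.
    by move=> s ts su; apply: f_le_m; lra.
  have : K * (u - t) <= K * delta by apply: ler_wpM2l => //; lra.
  have := K_delta; have := normr_ge0 (f m); nra.
have fm0 : `|f m| <= 0.
  case: f0 => [flo | fhi].
  - by have := half lo m (lexx _) lom mhi; rewrite flo subr0; lra.
  - by have := half m hi lom mhi (lexx _); rewrite fhi sub0r normrN; lra.
by move=> s ls sh; apply/normr0_eq0/eqP; rewrite eq_le normr_ge0 andbT;
  apply: le_trans (f_le_m s ls sh) fm0.
Qed.

Lemma vanish_near q x : c <= q -> q <= d -> f q = 0 -> c <= x -> x <= d ->
  `|x - q| <= delta -> f x = 0.
Proof.
move=> cq qd fq cx xd; rewrite ler_norml => /andP[xq qx].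
have [q_le_x | x_lt_q] := leP q x.
- by apply: (@vanish_short_segment q x) => //; try lra; left.
- by apply: (@vanish_short_segment x q) => //; try lra; right.
Qed.

Lemma vanish_within_steps p : c <= p -> p <= d -> f p = 0 ->
  forall n x, c <= x -> x <= d -> `|x - p| <= n%:R * delta -> f x = 0.
Proof.
move=> cp pd fp; elim=> [|n IHn] x cx xd.
  by rewrite mul0r normr_le0 subr_eq0 => /eqP ->.
rewrite -natr1; set k : R := n%:R => xp.
have k_ge0 : 0 <= k by rewrite ler0n.
have k1_gt0 : 0 < k + 1 by lra.
pose y := (p + k * x) / (k + 1).
have yp : y - p = k / (k + 1) * (x - p) by rewrite /y; field; lra.
have xy : x - y = (x - p) / (k + 1) by rewrite /y; field; lra.
have cy : c <= y by rewrite /y ler_pdivlMr //; nra.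
have yd : y <= d by rewrite /y ler_pdivrMr //; nra.
apply: (vanish_near (q := y)) => //.
  apply: IHn => //; rewrite yp normrM ger0_norm ?divr_ge0 //; last lra.
  by rewrite mulrAC ler_pdivrMr //; have := normr_ge0 (x - p); nra.
by rewrite xy normf_div (gtr0_norm k1_gt0) ler_pdivrMr //; nra.
Qed.

Lemma increment_bound_vanish p : c <= p -> p <= d -> f p = 0 ->
  forall x, c <= x -> x <= d -> f x = 0.
Proof.
move=> cp pd fp x cx xd.
apply: (vanish_within_steps cp pd fp (n := (Num.truncn ((d - c) / delta)).+1)) => //.
have := truncnS_gt ((d - c) / delta).
rewrite ltr_pdivrMr // => dc_lt.
by rewrite ler_norml; apply/andP; split; lra.
Qed.

End IncrementBound.

Section Primitive.
Variable R : realType.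
Notation mu := (@lebesgue_measure R).
Implicit Types (F G h : R -> R) (a b c d t u : R).

Lemma ae_filterS (P Q : R -> Prop) :
  (forall s, P s -> Q s) -> {ae mu, forall s, P s} -> {ae mu, forall s, Q s}.
Proof. exact: (@filterS _ _ (ae_filter_ringOfSetsType mu)). Qed.

Definition is_primitive a b F G :=
  mu.-integrable `[a, b] (EFin \o G) /\
  forall t u, a <= t -> t <= u -> u <= b ->
    F u - F t = \int[mu]_(s in `]t, u]) G s.

Lemma integrable_itv_scaled a b h F :
  measurable_fun `[a, b] h -> (forall s, s \in `[a, b] -> 0 <= h s <= 1) ->
  {within `[a, b], continuous F} ->
  mu.-integrable `[a, b] (EFin \o (fun s => h s * F s)).
Proof.
move=> mh h01 cF.
have hb : [bounded h x | x in `[a, b]].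
  exists 1; split; first exact: num_real.
  by move=> M M1 s /h01 /andP[h0 h1]; rewrite /= ger0_norm //; lra.
apply: (eq_integrable _ _ _ _ (integrableMr _ _ _ _)) => //.
- by move=> s _; rewrite /= EFinM.
- exact: mh.
- exact: hb.
- exact: continuous_compact_integrable (@segment_compact R a b) cF.
Qed.

Lemma integrable_itv_oc a b t u G :
  mu.-integrable `[a, b] (EFin \o G) -> a <= t -> u <= b ->
  mu.-integrable `]t, u] (EFin \o G).
Proof.
move=> iG at_ ub; apply: integrableS iG => // s /=.
by rewrite !in_itv /= => /andP[? ?]; apply/andP; split; lra.
Qed.

Lemma is_primitive_integral_form a b F G :
  mu.-integrable `[a, b] (EFin \o G) ->
  (forall t, t \in `[a, b] -> F t = F a + \int[mu]_(s in `[a, t]) G s) ->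
  is_primitive a b F G.
Proof.
move=> iG FG; split => // t u at_ tu ub.
rewrite (FG u) ?(FG t) ?in_itv /=; try (apply/andP; split; lra).
rewrite opprD addrACA subrr add0r.
apply: (@Rintegral_itvB _ G (BLeft a) (BRight u) t); rewrite ?bnd_simp //.
by apply: integrableS iG => //; apply: subset_itvl; rewrite bnd_simp.
Qed.

Lemma is_primitiveW a b c d F G :
  is_primitive a b F G -> a <= c -> d <= b -> is_primitive c d F G.
Proof.
move=> [iG FG] ac db; split => [|t u ct tu ud]; last by apply: FG; lra.
by apply: integrableS iG => //; apply: subset_itv; rewrite bnd_simp.
Qed.

Lemma is_primitiveD a b F1 G1 F2 G2 :
  is_primitive a b F1 G1 -> is_primitive a b F2 G2 ->
  is_primitive a b (fun s => F1 s + F2 s) (fun s => G1 s + G2 s).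
Proof.
move=> [iG1 FG1] [iG2 FG2].
split => [|t u at_ tu ub]; first exact: (integrableD _ iG1 iG2).
by rewrite RintegralD ?(integrable_itv_oc _ at_ ub) // -FG1 // -FG2 //; ring.
Qed.

Lemma is_primitiveB a b F1 G1 F2 G2 :
  is_primitive a b F1 G1 -> is_primitive a b F2 G2 ->
  is_primitive a b (fun s => F1 s - F2 s) (fun s => G1 s - G2 s).
Proof.
move=> [iG1 FG1] [iG2 FG2].
split => [|t u at_ tu ub]; first exact: (integrableB _ iG1 iG2).
by rewrite RintegralB ?(integrable_itv_oc _ at_ ub) // -FG1 // -FG2 //; ring.
Qed.

Lemma norm_Rintegral_itv_le G t u B :
  t <= u -> 0 <= B -> mu.-integrable `]t, u] (EFin \o G) ->
  {ae mu, forall s, s \in `]t, u] -> `|G s| <= B} ->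
  `|\int[mu]_(s in `]t, u]) G s| <= B * (u - t).
Proof.
move=> tu B0 iG GB.
apply: le_trans (le_normr_Rintegral _ iG) _ => //.
have /integrableP[/measurable_EFinP ? ?] := integrable_norm iG.
have mu_tu : mu `]t, u] = (u - t)%:E.
  rewrite lebesgue_measure_itv /= lte_fin.
  have [->|tu'] := eqVneq t u; first by rewrite ltxx subrr.
  by rewrite lt_neqAle tu' tu -EFinD.
rewrite /Rintegral -lee_fin EFinM -mu_tu fineK; last first.
  by rewrite -integral_fin_num_abs.
under eq_integral do rewrite -abse_EFin.
by apply: (integral_le_bound B%:E) => //; case/integrableP: iG.
Qed.

Lemma is_primitive_vanish c d K F G :
  is_primitive c d F G -> {within `[c, d], continuous F} -> 0 <= K ->
  {ae mu, forall s, s \in `]c, d] -> `|G s| <= K * `|F s|} ->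
  forall p, c <= p -> p <= d -> F p = 0 ->
  forall x, c <= x -> x <= d -> F x = 0.
Proof.
move=> [iG FG] cF K_ge0 GF p cp pd Fp x cx xd.
apply: (increment_bound_vanish K_ge0 cF _ cp pd Fp cx xd) => t u M ct tu ud FM.
rewrite FG //; apply: norm_Rintegral_itv_le => //.
- by have := FM t (lexx t) tu; have := normr_ge0 (F t); nra.
- exact: integrable_itv_oc iG ct ud.
apply: ae_filterS GF => s GFs; rewrite in_itv /= => /andP[ts su].
apply: le_trans (GFs _) _; first by rewrite in_itv /=; apply/andP; split; lra.
by apply: ler_wpM2l => //; apply: FM; lra.
Qed.

Lemma is_primitive_sign c d K F G :
  is_primitive c d F G -> {within `[c, d], continuous F} -> 0 <= K ->
  {ae mu, forall s, s \in `]c, d] -> `|G s| <= K * `|F s|} ->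
  forall p, c <= p -> p <= d -> F p != 0 ->
  forall x, c <= x -> x <= d -> 0 < F p * F x.
Proof.
move=> FG cF K_ge0 GF p cp pd Fp_neq0 x cx xd; rewrite ltNge; apply/negP => Fpx.
have [z [cz zd Fz]] := root_between cF cp pd cx xd Fpx.
by move: Fp_neq0; rewrite (is_primitive_vanish FG cF K_ge0 GF cz zd Fz cp pd) eqxx.
Qed.

End Primitive.

Section CostateAlgebra.
Variable R : realType.
Implicit Types a b l m k y : R.

Definition costate_rhs a b l m := (1 + a) / 2 * l - (1 - b) / 2 * m.

Lemma norm_scale_le k y : 0 <= k -> k <= 1 -> `|k * y| <= `|y|.
Proof. by move=> k0 k1; rewrite normrM ger0_norm //; have := normr_ge0 y; nra. Qed.

Lemma norm_costate_rhs_le a b l m : 0 <= a -> a <= 1 -> b = 1 \/ m = 0 ->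
  `|costate_rhs a b l m| <= `|l|.
Proof.
move=> a0 a1 bm; rewrite /costate_rhs.
have -> : (1 - b) / 2 * m = 0 by case: bm => ->; rewrite ?subrr ?mul0r ?mulr0.
by rewrite subr0; apply: norm_scale_le; lra.
Qed.

Lemma norm_costate_rhs_le2 a b l m : 0 <= a -> a <= 1 -> 0 <= b -> b <= 1 ->
  l < m -> (0 < m -> b = 1) -> `|costate_rhs a b l m| <= 2 * `|l|.
Proof.
move=> a0 a1 b0 b1 lm mb; have [m_gt0 | m_le0] := ltP 0 m.
  have := @norm_costate_rhs_le a b l m a0 a1 (or_introl (mb m_gt0)).
  by have := normr_ge0 l; lra.
rewrite /costate_rhs (ltr0_norm (lt_le_trans lm m_le0)) ler_norml.
by apply/andP; split; nra.
Qed.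

Lemma costate_rhs_swapB a b l m :
  costate_rhs b a m l - costate_rhs a b l m = m - l.
Proof. by rewrite /costate_rhs; field. Qed.

Lemma box_maximizer_eq1 a1 a2 l1 l2 : a1 <= 1 -> 0 <= a2 <= 1 ->
  (forall b1 b2, 0 <= b1 <= 1 -> 0 <= b2 <= 1 ->
     b1 * l1 + b2 * l2 <= a1 * l1 + a2 * l2) ->
  0 < l1 -> a1 = 1.
Proof.
move=> a1_le1 a2_01 amax l1_gt0.
have := amax 1 a2 _ a2_01; rewrite ler01 lexx => /(_ isT).
by have := a1_le1; nra.
Qed.

End CostateAlgebra.

Section ControlledPrimitives.
Variables (R : realType) (c d : R).
Notation mu := (@lebesgue_measure R).
Implicit Types a b x z l m : R -> R.

Lemma is_primitive_costate a b l m :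
  measurable_fun `[c, d] a -> measurable_fun `[c, d] b ->
  (forall s, s \in `[c, d] -> 0 <= a s <= 1) ->
  (forall s, s \in `[c, d] -> 0 <= b s <= 1) ->
  {within `[c, d], continuous l} -> {within `[c, d], continuous m} ->
  (forall t, t \in `[c, d] -> l t = l c +
     \int[mu]_(s in `[c, t]) costate_rhs (a s) (b s) (l s) (m s)) ->
  is_primitive c d l (fun s => costate_rhs (a s) (b s) (l s) (m s)).
Proof.
move=> ma mb a01 b01 cl cm lE; apply: is_primitive_integral_form lE.
apply: (integrableB _ (integrable_itv_scaled _ _ cl) (integrable_itv_scaled _ _ cm)).
- by [].
- by apply: measurable_funM => //; apply: measurable_funD.
- by move=> s /a01 /andP[? ?]; apply/andP; split; lra.
- by apply: measurable_funM => //; apply: measurable_funB.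
- by move=> s /b01 /andP[? ?]; apply/andP; split; lra.
Qed.

Lemma is_primitive_state a x z :
  measurable_fun `[c, d] a -> (forall s, s \in `[c, d] -> 0 <= a s <= 1) ->
  {within `[c, d], continuous x} -> {within `[c, d], continuous z} ->
  (forall t, t \in `[c, d] -> x t = x c +
     \int[mu]_(s in `[c, t]) (- x s + (1 - a s) * z s)) ->
  is_primitive c d x (fun s => - x s + (1 - a s) * z s).
Proof.
move=> ma a01 cx cz xE; apply: is_primitive_integral_form xE.
have ix : mu.-integrable `[c, d] (EFin \o x).
  exact: continuous_compact_integrable (@segment_compact R c d) cx.
apply: (integrableD _ (integrableN ix) (integrable_itv_scaled _ _ cz)).
- by [].
- by apply: measurable_funB.
- by move=> s /a01 /andP[? ?]; apply/andP; split; lra.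
Qed.

Lemma costate_vanish a b l m p t :
  is_primitive c d l (fun s => costate_rhs (a s) (b s) (l s) (m s)) ->
  {within `[c, d], continuous l} ->
  (forall s, s \in `[c, d] -> 0 <= a s <= 1) ->
  {ae mu, forall s, s \in `]c, d] -> b s = 1 \/ m s = 0} ->
  c <= p -> p <= d -> l p = 0 -> c <= t -> t <= d -> l t = 0.
Proof.
move=> lP cl a01 bm cp pd lp ct td.
apply: (is_primitive_vanish lP cl ler01 _ cp pd lp ct td).
apply: ae_filterS bm => s bms sI; rewrite mul1r.
have /a01 /andP[a0 a1] : s \in `[c, d] by apply: subset_itv_oc_cc.
exact: norm_costate_rhs_le a0 a1 (bms sI).
Qed.

End ControlledPrimitives.

Section Proposition6.
Variables (R : realType) (T : R) (a1 a2 x1 x2 l1 l2 : R -> R).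
Notation mu := (@lebesgue_measure R).
Hypothesis T_gt0 : 0 < T.
Hypothesis xibar0_gt0 : 0 < xibar x1 x2 0.
Hypothesis adm : admissible T a1 a2.
Hypothesis traj : trajectory T a1 a2 x1 x2.
Hypothesis x2_le_x1 : forall t, t \in `[0, T] -> x2 t <= x1 t.
Hypothesis lam : costate T a1 a2 x1 x2 l1 l2.
Hypothesis pmp : pmp_min T a1 a2 x1 x2 l1 l2.

Let a1_01 s : s \in `[0, T] -> 0 <= a1 s <= 1.
Proof. by case: adm => _ [_ /(_ s) adm_s] /adm_s []. Qed.

Let a2_01 s : s \in `[0, T] -> 0 <= a2 s <= 1.
Proof. by case: adm => _ [_ /(_ s) adm_s] /adm_s [_ []]. Qed.

Let l1_cont : {within `[0, T], continuous l1}. Proof. by case: lam. Qed.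
Let l2_cont : {within `[0, T], continuous l2}. Proof. by case: lam => _ []. Qed.

Let in_0T s : 0 <= s -> s <= T -> s \in `[0, T].
Proof. by move=> s0 sT; rewrite in_itv /= s0 sT. Qed.

Lemma l1_primitive :
  is_primitive 0 T l1 (fun s => costate_rhs (a1 s) (a2 s) (l1 s) (l2 s)).
Proof.
case: adm lam => [ma1 [ma2 _]] [_ [_ [l1E _]]].
exact: is_primitive_costate ma1 ma2 a1_01 a2_01 l1_cont l2_cont l1E.
Qed.

Lemma l2_primitive :
  is_primitive 0 T l2 (fun s => costate_rhs (a2 s) (a1 s) (l2 s) (l1 s)).
Proof.
case: adm lam => [ma1 [ma2 _]] [_ [_ [_ [l2E _]]]].
exact: is_primitive_costate ma2 ma1 a2_01 a1_01 l2_cont l1_cont l2E.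
Qed.

Lemma xsum_gt0 s : s \in `[0, T] -> 0 < x1 s + x2 s.
Proof.
case: adm traj => [ma1 [ma2 _]] [cx1 [cx2 [x1E x2E]]].
have csum : {within `[0, T], continuous (fun r => x1 r + x2 r)}.
  by move=> r; apply: continuousD; [exact: cx1 | exact: cx2].
have cxb : {within `[0, T], continuous (xibar x1 x2)}.
  by move=> r; apply: cvgMl; exact: csum.
have sumP := is_primitiveD (is_primitive_state ma1 a1_01 cx1 cxb x1E)
                           (is_primitive_state ma2 a2_01 cx2 cxb x2E).
have sum_bound : {ae mu, forall r, r \in `]0, T] ->
    `|(- x1 r + (1 - a1 r) * xibar x1 x2 r) + (- x2 r + (1 - a2 r) * xibar x1 x2 r)|
    <= 1 * `|x1 r + x2 r|}.
  apply: aeW => r /subset_itv_oc_cc rI.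
  have /andP[? ?] := a1_01 rI; have /andP[? ?] := a2_01 rI.
  have -> : (- x1 r + (1 - a1 r) * xibar x1 x2 r) + (- x2 r + (1 - a2 r) * xibar x1 x2 r)
          = (a1 r + a2 r) / 2 * - (x1 r + x2 r) by rewrite /xibar; field.
  by rewrite mul1r -(normrN (x1 r + x2 r)); apply: norm_scale_le; lra.
have S0_gt0 : 0 < x1 0 + x2 0 by have := xibar0_gt0; rewrite /xibar; lra.
move=> /[dup] sI; rewrite in_itv /= => /andP[s0 sT].
have := is_primitive_sign sumP csum ler01 sum_bound (lexx 0) (le_trans s0 sT)
  (lt0r_neq0 S0_gt0) s0 sT.
by rewrite pmulr_rgt0.
Qed.

Lemma minimum_condition_sign : {ae mu, forall s, s \in `[0, T] ->
  (0 < l1 s -> a1 s = 1) /\ (0 < l2 s -> a2 s = 1)}.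
Proof.
apply: ae_filterS pmp => s smin sI.
have xb_gt0 : 0 < xibar x1 x2 s by have := xsum_gt0 sI; rewrite /xibar; lra.
have amax b1 b2 : 0 <= b1 <= 1 -> 0 <= b2 <= 1 ->
    b1 * l1 s + b2 * l2 s <= a1 s * l1 s + a2 s * l2 s.
  move=> b1_01 b2_01; rewrite -(@ler_nM2l _ (- xibar x1 x2 s)) ?oppr_lt0 //.
  apply: smin => //; move: b1_01 b2_01 => /andP[? ?] /andP[? ?]; lra.
have /andP[_ a1_le1] := a1_01 sI; have /andP[_ a2_le1] := a2_01 sI.
split => l_gt0; first exact: box_maximizer_eq1 a1_le1 (a2_01 sI) amax l_gt0.
apply: box_maximizer_eq1 a2_le1 (a1_01 sI) _ l_gt0 => b2 b1 b2_01 b1_01.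
by rewrite addrC [a2 s * _ + _]addrC; exact: amax.
Qed.

Lemma l1T_gt0 : 0 < l1 T.
Proof.
have TI := in_0T (ltW T_gt0) (lexx T).
case: lam => _ [_ [_ [_ [-> _]]]].
by have := xsum_gt0 TI; have := x2_le_x1 TI; lra.
Qed.

Lemma l1_vanish c p t : 0 <= c ->
  {ae mu, forall s, s \in `]c, T] -> a2 s = 1 \/ l2 s = 0} ->
  c <= p -> p <= T -> l1 p = 0 -> c <= t -> t <= T -> l1 t = 0.
Proof.
move=> c0; apply: costate_vanish.
- exact: is_primitiveW l1_primitive c0 (lexx T).
- exact: within_itv_continuousW l1_cont c0 (lexx T).
- by move=> s; rewrite in_itv /= => /andP[cs sT]; apply: a1_01; apply: in_0T; lra.
Qed.

Lemma l2_vanish c p t : 0 <= c ->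
  {ae mu, forall s, s \in `]c, T] -> a1 s = 1 \/ l1 s = 0} ->
  c <= p -> p <= T -> l2 p = 0 -> c <= t -> t <= T -> l2 t = 0.
Proof.
move=> c0; apply: costate_vanish.
- exact: is_primitiveW l2_primitive c0 (lexx T).
- exact: within_itv_continuousW l2_cont c0 (lexx T).
- by move=> s; rewrite in_itv /= => /andP[cs sT]; apply: a2_01; apply: in_0T; lra.
Qed.

Lemma costates_gt0_of_l2T_gt0 : 0 < l2 T ->
  forall t, t \in `[0, T] -> 0 < l1 t /\ 0 < l2 t.
Proof.
move=> l2T_gt0 t; rewrite in_itv /= => /andP[t_ge0 tT].
apply/andP; rewrite -lt_min ltNge; apply/negP => min_le0.
have cmin : {within `[0, T], continuous (fun s => Num.min (l1 s) (l2 s))}.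
  by move=> s; apply: continuous_min; [exact: l1_cont | exact: l2_cont].
have [|t0 [t0_ge0 t0_lt_T min0 min_gt0]] := last_root cmin t_ge0 tT min_le0.
  by rewrite lt_min l1T_gt0 l2T_gt0.
have ones : {ae mu, forall s, s \in `]t0, T] -> a1 s = 1 /\ a2 s = 1}.
  apply: ae_filterS minimum_condition_sign => s sgn.
  rewrite in_itv /= => /andP[t0s sT].
  have /andP[l1s l2s] : (0 < l1 s) && (0 < l2 s) by rewrite -lt_min min_gt0.
  by have [e1 e2] := sgn (in_0T (le_trans t0_ge0 (ltW t0s)) sT); split; auto.
have a2_one : {ae mu, forall s, s \in `]t0, T] -> a2 s = 1 \/ l2 s = 0}.
  by apply: ae_filterS ones => s + sI => /(_ sI) [_ ->]; left.
have a1_one : {ae mu, forall s, s \in `]t0, T] -> a1 s = 1 \/ l1 s = 0}.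
  by apply: ae_filterS ones => s + sI => /(_ sI) [-> _]; left.
have t0T := ltW t0_lt_T.
have [l12 | /ltW l21] := leP (l1 t0) (l2 t0).
- rewrite min_l // in min0.
  have := l1_vanish t0_ge0 a2_one (lexx t0) t0T min0 t0T (lexx T).
  by have := l1T_gt0; lra.
- rewrite min_r // in min0.
  have := l2_vanish t0_ge0 a1_one (lexx t0) t0T min0 t0T (lexx T).
  by lra.
Qed.

Lemma costates_of_l2T_eq0 : l2 T = 0 ->
  forall t, t \in `[0, T] -> 0 < l1 t /\ l2 t = 0.
Proof.
move=> l2T0.
have a1_one c : 0 <= c -> (forall s, c < s -> s <= T -> 0 < l1 s) ->
    {ae mu, forall s, s \in `]c, T] -> a1 s = 1 \/ l1 s = 0}.
  move=> c0 l1_pos; apply: ae_filterS minimum_condition_sign => s sgn.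
  rewrite in_itv /= => /andP[cs sT]; left.
  by apply: (sgn (in_0T (le_trans c0 (ltW cs)) sT)).1; exact: l1_pos.
have l1_gt0 t : t \in `[0, T] -> 0 < l1 t.
  rewrite in_itv /= => /andP[t_ge0 tT]; rewrite ltNge; apply/negP => l1t_le0.
  have [t0 [t0_ge0 t0_lt_T l1t0 l1_pos]] := last_root l1_cont t_ge0 tT l1t_le0 l1T_gt0.
  have t0T := ltW t0_lt_T.
  have l2_zero := l2_vanish t0_ge0 (a1_one _ t0_ge0 l1_pos) t0T (lexx T) l2T0.
  have l2_one : {ae mu, forall s, s \in `]t0, T] -> a2 s = 1 \/ l2 s = 0}.
    by apply: aeW => s; rewrite in_itv /= => /andP[t0s sT]; right; apply: l2_zero; lra.
  have := l1_vanish t0_ge0 l2_one (lexx t0) t0T l1t0 t0T (lexx T).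
  by have := l1T_gt0; lra.
move=> t /[dup] tI; rewrite in_itv /= => /andP[t_ge0 tT]; split; first exact: l1_gt0.
apply: (l2_vanish (lexx 0) (a1_one _ (lexx 0) _) (le_trans t_ge0 tT) (lexx T) l2T0) => //.
by move=> s s0 sT; apply: l1_gt0; apply: in_0T => //; exact: ltW.
Qed.

Lemma costate2_lt0_of_l2T_lt0 : l2 T < 0 -> forall t, t \in `[0, T] -> l2 t < 0.
Proof.
move=> l2T_lt0; have T_ge0 := ltW T_gt0.
have diffP := is_primitiveB l2_primitive l1_primitive.
have cdiff : {within `[0, T], continuous (fun s => l2 s - l1 s)}.
  by move=> s; apply: continuousB; [exact: l2_cont | exact: l1_cont].
have diffT_lt0 : l2 T - l1 T < 0 by have := l1T_gt0; lra.
have diff_lt0 s : s \in `[0, T] -> l2 s - l1 s < 0.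
  rewrite in_itv /= => /andP[s0 sT].
  have diff_bound : {ae mu, forall r, r \in `]0, T] ->
      `|costate_rhs (a2 r) (a1 r) (l2 r) (l1 r) - costate_rhs (a1 r) (a2 r) (l1 r) (l2 r)|
      <= 1 * `|l2 r - l1 r|}.
    by apply: aeW => r _; rewrite costate_rhs_swapB mul1r.
  have := is_primitive_sign diffP cdiff ler01 diff_bound T_ge0 (lexx T)
    (ltr0_neq0 diffT_lt0) s0 sT.
  by rewrite nmulr_rgt0.
have l2_bound : {ae mu, forall s, s \in `]0, T] ->
    `|costate_rhs (a2 s) (a1 s) (l2 s) (l1 s)| <= 2 * `|l2 s|}.
  apply: ae_filterS minimum_condition_sign => s sgn /subset_itv_oc_cc sI.
  have /andP[? ?] := a1_01 sI; have /andP[? ?] := a2_01 sI.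
  apply: norm_costate_rhs_le2 => //; last exact: (sgn sI).1.
  by have := diff_lt0 s sI; lra.
move=> t; rewrite in_itv /= => /andP[t0 tT].
have := is_primitive_sign l2_primitive l2_cont _ l2_bound T_ge0 (lexx T)
  (ltr0_neq0 l2T_lt0) t0 tT.
by rewrite nmulr_rgt0 //; apply; lra.
Qed.

End Proposition6.

Theorem proposition6 (R : realType) (T : R) (a1 a2 x1 x2 l1 l2 : R -> R) :
  0 < T ->
  0 < xibar x1 x2 0 ->
  x2 0 < x1 0 ->
  optimal T a1 a2 x1 x2 ->
  (forall t, t \in `[0, T] -> x2 t <= x1 t) ->
  costate T a1 a2 x1 x2 l1 l2 ->
  pmp_min T a1 a2 x1 x2 l1 l2 ->
  [/\ (0 < l2 T -> forall t, t \in `[0, T] -> 0 < l1 t /\ 0 < l2 t),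
      (l2 T = 0 -> forall t, t \in `[0, T] -> 0 < l1 t /\ l2 t = 0) &
      (l2 T < 0 -> forall t, t \in `[0, T] -> l2 t < 0)].
Proof.
move=> T_gt0 xibar0_gt0 _ [adm [traj _]] x2_le_x1 lam pmp.
split.
- exact: (costates_gt0_of_l2T_gt0 T_gt0 xibar0_gt0 adm traj x2_le_x1 lam pmp).
- exact: (costates_of_l2T_eq0 T_gt0 xibar0_gt0 adm traj x2_le_x1 lam pmp).
- exact: (costate2_lt0_of_l2T_lt0 T_gt0 xibar0_gt0 adm traj x2_le_x1 lam pmp).
Qed.
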